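(* Let $n \in \mathbb{N}$ and $M,N \in \mathcal{M}_n(\mathbb{C})$. Let $P_\perp$ denote the orthogonal projection of $\mathbb{C}^{2n}$ onto $\left[\mathcal{R}\begin{pmatrix} N \\ \overline{M}\end{pmatrix}\right]^{\perp}$, where $\begin{pmatrix} N \\ \overline{M}\end{pmatrix}$ is the $2n\times n$ complex matrix obtained by stacking $N$ on top of $\overline{M}$. The following are equivalent: \begin{enumerate} \item $\{ z \in \mathbb{C}^n \mid Mz + N\bar{z} = 0\}$ is a complex vector subspace of $\mathbb{C}^n$ (i.e. it is closed under multiplication by $i$). \item The (real-linear) map $\mathbb{C}^n \to \mathbb{C}^{2n}$, $z \mapsto P_\perp \begin{pmatrix} z \\ \bar z\end{pmatrix}$, is injective. \item There exist $U,V \in \mathcal{M}_n(\mathbb{C})$ such that for every $p \in \mathcal{R}(M,N)$, $$\{ z \in \mathbb{C}^n \mid Mz + N\bar z = p\} = \{ z \in \mathbb{C}^n \mid (UM + V\overline{N})z = Up + V\overline{p}\}.$$ \end{enumerate}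
   Context: $\mathcal{M}_n(\mathbb{C})$ is the set of $n\times n$ complex matrices; $\bar z$, $\overline{M}$ denote entrywise complex conjugation. $\mathbb{C}^{2n}$ is equipped with the Hermitian inner product $\langle u,v\rangle = \sum_{k=1}^{2n} u_k \bar v_k$, and $\perp$ denotes the orthogonal complement with respect to it. $\mathcal{R}(X)$ denotes the range (column space) of a matrix $X$. The range of the system is $\mathcal{R}(M,N) := \{ p \in \mathbb{C}^n \mid \exists z \in \mathbb{C}^n : Mz + N\bar z = p\}$. *)

From HB Require Import structures.
From mathcomp Require Import all_boot all_order all_algebra.
Set Implicit Arguments. Unset Strict Implicit. Unset Printing Implicit Defensive.
Import Order.TTheory GRing.Theory Num.Theory Num.Def.
Local Open Scope ring_scope.

Definition conjm (C : numClosedFieldType) (m n : nat) (A : 'M[C]_(m, n)) : 'M[C]_(m, n) :=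
  map_mx conjC A.

Definition hdot (C : numClosedFieldType) (m : nat) (u v : 'cV[C]_m) : C :=
  \sum_(k < m) u k 0 * conjC (v k 0).

Definition in_range_perp (C : numClosedFieldType) (m n : nat)
  (A : 'M[C]_(m, n)) (v : 'cV[C]_m) : Prop :=
  forall x : 'cV[C]_n, hdot v (A *m x) = 0.

Definition is_orth_proj_range_perp (C : numClosedFieldType) (m n : nat)
  (A : 'M[C]_(m, n)) (P : 'M[C]_m) : Prop :=
  forall v : 'cV[C]_m,
    in_range_perp A (P *m v) /\
    (forall w : 'cV[C]_m, in_range_perp A w -> hdot (v - P *m v) w = 0).

Definition sol_set (C : numClosedFieldType) (n : nat) (M N : 'M[C]_n)
  (p : 'cV[C]_n) (z : 'cV[C]_n) : Prop :=
  M *m z + N *m conjm z = p.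

Definition range_MN (C : numClosedFieldType) (n : nat) (M N : 'M[C]_n)
  (p : 'cV[C]_n) : Prop :=
  exists z : 'cV[C]_n, M *m z + N *m conjm z = p.

Definition complex_subspace (C : numClosedFieldType) (n : nat)
  (S : 'cV[C]_n -> Prop) : Prop :=
  S 0 /\ forall (a : C) (z w : 'cV[C]_n), S z -> S w -> S (a *: z + w).

From HB Require Import structures.
From mathcomp Require Import all_boot all_order all_algebra.
Set Implicit Arguments. Unset Strict Implicit. Unset Printing Implicit Defensive.
Import Order.TTheory GRing.Theory Num.Theory Num.Def.
Local Open Scope ring_scope.

(* Everything reduces to the kernel condition: every solution z of
   M z + N z̄ = 0 satisfies M z = 0 (and hence N z̄ = 0).
   - Since i z solves the homogeneous system iff M z - N z̄ = 0, the solution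
     set is complex exactly under the kernel condition.
   - P_perp kills exactly the range of [N; M̄], so z ↦ P_perp [z; z̄] is
     injective iff [N x; M̄ x] = [z; z̄] forces z = 0, i.e. N x = M x̄ forces
     N x = 0; this is the kernel condition read on the solution i x̄.
   - The kernel condition says that the column spaces of [M; N̄] and [N; M̄]
     meet only in 0, so some block row (U V) annihilates [N; M̄] while being
     injective on the column space of [M; N̄]. Applying (U V) to the system
     written as [M; N̄] z + [N; M̄] z̄ = [p; p̄] gives the linear system of (3).
     Conversely, the solution set of a complex linear system is complex. *)

Section Conjugation.
Variable C : numClosedFieldType.

Lemma conjmM m n p (A : 'M[C]_(m, n)) (B : 'M[C]_(n, p)) :
  conjm (A *m B) = conjm A *m conjm B.
Proof. exact: map_mxM. Qed.

Lemma conjmK m n (A : 'M[C]_(m, n)) : conjm (conjm A) = A.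
Proof. by apply/matrixP => i j; rewrite !mxE conjCK. Qed.

Lemma conjmD m n (A B : 'M[C]_(m, n)) : conjm (A + B) = conjm A + conjm B.
Proof. exact: map_mxD. Qed.

Lemma conjmB m n (A B : 'M[C]_(m, n)) : conjm (A - B) = conjm A - conjm B.
Proof. exact: map_mxB. Qed.

Lemma conjmZ m n (a : C) (A : 'M[C]_(m, n)) : conjm (a *: A) = a^* *: conjm A.
Proof. exact: map_mxZ. Qed.

Lemma conjm0 m n : conjm (0 : 'M[C]_(m, n)) = 0.
Proof. exact: map_mx0. Qed.

Lemma scalei_eq0 m n (A : 'M[C]_(m, n)) : ('i *: A == 0) = (A == 0).
Proof. by rewrite scaler_eq0 (negbTE (neq0Ci C)). Qed.

End Conjugation.

Section HermitianProduct.
Variables (C : numClosedFieldType) (m : nat).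
Implicit Types u v w : 'cV[C]_m.

Lemma hdotC u v : hdot u v = (hdot v u)^*.
Proof.
rewrite /hdot rmorph_sum; apply: eq_bigr => k _.
by rewrite rmorphM /= conjCK mulrC.
Qed.

Lemma hdotBl u v w : hdot (u - v) w = hdot u w - hdot v w.
Proof. by rewrite /hdot -sumrB; apply: eq_bigr => k _; rewrite !mxE mulrBl. Qed.

Lemma hdotvv_eq0 u : hdot u u = 0 -> u = 0.
Proof.
move=> uu0; apply/matrixP => i j; rewrite (ord1 j) mxE.
have /eqP := psumr_eq0P (fun k _ => mul_conjC_ge0 (u k 0)) uu0 (i := i) erefl.
by rewrite mul_conjC_eq0 => /eqP.
Qed.

End HermitianProduct.

Section OrthogonalProjection.
Variables (C : numClosedFieldType) (m k : nat) (A : 'M[C]_(m, k)) (P : 'M[C]_m).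
Hypothesis hP : is_orth_proj_range_perp A P.

Lemma orth_proj_perp_range (x : 'cV[C]_k) : P *m (A *m x) = 0.
Proof.
have [PAx_perp orthAx] := hP (A *m x).
have := orthAx _ PAx_perp.
rewrite hdotBl (hdotC (A *m x)) PAx_perp conjC0 sub0r => /eqP.
by rewrite oppr_eq0 => /eqP /hdotvv_eq0.
Qed.

(* The rows of [cokermx A^T]^* are orthogonal to the range of A, so they are
   orthogonal to any v killed by P; this says v^T *m cokermx A^T = 0. *)
Lemma orth_proj_perp_kerP (v : 'cV[C]_m) : P *m v = 0 -> exists x, v = A *m x.
Proof.
move=> Pv0; have [_ orthv] := hP v; rewrite Pv0 subr0 in orthv.
suff /submxP[D vD] : (v^T <= A^T)%MS.
  by exists D^T; rewrite -[v]trmxK vD trmx_mul trmxK.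
rewrite submxE; apply/eqP/matrixP => i j; rewrite (ord1 i) !mxE.
set K := cokermx A^T.
have Kj_perp : in_range_perp A (\col_l (K l j)^*).
  move=> y; rewrite /hdot.
  have AyK0 : ((A *m y)^T *m K) 0 j = 0.
    by rewrite trmx_mul -mulmxA mulmx_coker mulmx0 mxE.
  rewrite -[RHS]conjC0 -[in RHS]AyK0 mxE rmorph_sum.
  by apply: eq_bigr => l _; rewrite !mxE rmorphM /= mulrC.
rewrite -[RHS](orthv _ Kj_perp); apply: eq_bigr => l _.
by rewrite !mxE conjCK.
Qed.

End OrthogonalProjection.

(* If the row spaces of X^T and Y^T meet trivially, a left inverse of X^T
   composed with the projection onto <<X^T>> along <<Y^T>> gives W. *)
Lemma exists_annihilator_injective_on (F : fieldType) m k l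
    (X : 'M[F]_(m, k)) (Y : 'M[F]_(m, l)) :
  (<<X^T>> :&: <<Y^T>> = 0)%MS ->
  exists W : 'M[F]_(k, m),
    W *m Y = 0 /\ forall d : 'cV[F]_k, W *m X *m d = 0 -> X *m d = 0.
Proof.
move=> capXY0; set Pr := proj_mx <<X^T>>%MS <<Y^T>>%MS.
set W := (Pr *m pinvmx X^T)^T; exists W; split.
  rewrite -[LHS]trmxK trmx_mul /W trmxK mulmxA.
  by rewrite proj_mx_0 ?mul0mx ?trmx0 // genmxE submx_refl.
move=> d WXd0.
have dXX0 : d^T *m X^T *m Pr *m pinvmx X^T = 0.
  by move/(congr1 trmx): WXd0; rewrite trmx0 !trmx_mul /W trmxK !mulmxA.
rewrite proj_mx_id ?genmxE ?submxMl // in dXX0.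
have := mulmxKpV (submxMl d^T X^T); rewrite dXX0 mul0mx => dX0.
by rewrite -[LHS]trmxK trmx_mul -dX0 trmx0.
Qed.

Section LinearizedSystem.
Variables (C : numClosedFieldType) (n : nat) (M N : 'M[C]_n).

Definition sol0_in_kerM := forall z : 'cV[C]_n, sol_set M N 0 z -> M *m z = 0.

Lemma sol0_NE z : sol_set M N 0 z -> N *m conjm z = - (M *m z).
Proof. by move=> Sz; apply/eqP; rewrite -addr_eq0 addrC Sz. Qed.

Lemma sol0_scalei z : sol_set M N 0 z -> sol_set M N 0 ('i *: z) -> M *m z = 0.
Proof.
move=> Sz; rewrite /sol_set conjmZ conjCi -!scalemxAr sol0_NE //.
rewrite scaleNr scalerN opprK -scalerDl => /eqP.
rewrite scaler_eq0 -mulr2n -mulr_natl mulf_eq0 pnatr_eq0 (negbTE (neq0Ci C)) /=.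
by move/eqP.
Qed.

Lemma complex_subspace_sol0P :
  complex_subspace (sol_set M N 0) <-> sol0_in_kerM.
Proof.
split=> [[S0 Slin] z Sz|kerM].
  by apply: sol0_scalei => //; rewrite -[_ *: z]addr0; apply: Slin.
split; first by rewrite /sol_set conjm0 !mulmx0 addr0.
move=> a z w Sz Sw; have Mz := kerM z Sz.
have Nz : N *m conjm z = 0 by rewrite sol0_NE // Mz oppr0.
by rewrite /sol_set conjmD conjmZ !mulmxDr -!scalemxAr Mz Nz !scaler0 !add0r.
Qed.

Lemma sol0_in_kerM_conjP :
  sol0_in_kerM <-> forall x : 'cV[C]_n, N *m x = M *m conjm x -> N *m x = 0.
Proof.
split=> [kerM x NxM|kerN z Sz].
  have Six : sol_set M N 0 ('i *: conjm x).
    by rewrite /sol_set conjmZ conjmK conjCi -!scalemxAr NxM scaleNr addrN.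
  have /eqP := kerM _ Six; rewrite -scalemxAr scalei_eq0 => /eqP Mx0.
  by rewrite NxM.
have := kerN (- 'i *: conjm z).
rewrite conjmZ conjmK rmorphN /= conjCi opprK -!scalemxAr sol0_NE //.
by rewrite scaleNr scalerN opprK => /(_ erefl) /eqP; rewrite scalei_eq0 => /eqP.
Qed.

Lemma injective_orth_proj_graphP (Pperp : 'M[C]_(n + n)) :
  is_orth_proj_range_perp (col_mx N (conjm M)) Pperp ->
  (forall z w : 'cV[C]_n,
     Pperp *m col_mx z (conjm z) = Pperp *m col_mx w (conjm w) -> z = w) <->
  (forall x : 'cV[C]_n, N *m x = M *m conjm x -> N *m x = 0).
Proof.
move=> hP; split=> [Pinj x NxM|kerN z w Pzw].
  apply: Pinj; rewrite conjm0 col_mx0 mulmx0.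
  have -> : col_mx (N *m x) (conjm (N *m x)) = col_mx N (conjm M) *m x.
    by rewrite mul_col_mx NxM conjmM conjmK.
  exact: orth_proj_perp_range hP _.
apply/eqP; rewrite -subr_eq0; apply/eqP.
have : Pperp *m col_mx (z - w) (conjm (z - w)) = 0.
  by rewrite conjmB -add_col_mx -opp_col_mx mulmxBr Pzw subrr.
case/(orth_proj_perp_kerP hP) => x; rewrite mul_col_mx => /eq_col_mx[zwN zwM].
have zwM' : z - w = M *m conjm x.
  by rewrite -[LHS]conjmK zwM conjmM conjmK.
by rewrite zwN kerN // -zwN.
Qed.

(* A vector a^T in both row spaces gives [M; N̄] a = [N; M̄] b; then
   a - b̄ and i (a + b̄) solve the homogeneous system, and the kernel
   condition applied to both forces [M; N̄] a = 0. *)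
Lemma sol0_in_kerM_capmx :
  sol0_in_kerM ->
  (<<(col_mx M (conjm N))^T>> :&: <<(col_mx N (conjm M))^T>> = 0)%MS.
Proof.
move=> kerM; apply/eqP/rowV0P => v; rewrite sub_capmx !genmxE.
case/andP => /submxP[a ->] /submxP[b vb].
move/(congr1 trmx): vb; rewrite !trmx_mul !trmxK !mul_col_mx => /eq_col_mx[Ma Na].
set a' := a^T in Ma Na *; set b' := b^T in Ma Na *.
have Na' : N *m conjm a' = M *m conjm b'.
  by rewrite -[N *m _]conjmK conjmM conjmK Na conjmM conjmK.
have S1 : sol_set M N 0 (a' - conjm b').
  by rewrite /sol_set conjmB conjmK !mulmxBr Ma Na' addrA subrK subrr.
have S2 : sol_set M N 0 ('i *: (a' + conjm b')).
  rewrite /sol_set conjmZ conjCi conjmD conjmK -!scalemxAr !mulmxDr Ma Na'.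
  by rewrite scaleNr [N *m b' + _]addrC subrr.
have /eqP := kerM _ S1; rewrite mulmxBr Ma -Na' subr_eq0 => /eqP Nb.
have /eqP := kerM _ S2; rewrite -scalemxAr scalei_eq0 mulmxDr Ma -Na' Nb.
rewrite -mulr2n -scaler_nat scaler_eq0 pnatr_eq0 /= => /eqP Na0.
have Xa0 : col_mx M (conjm N) *m a' = 0.
  by rewrite mul_col_mx Ma Nb Na0 -[conjm N *m a']conjmK conjmM conjmK Na0 conjm0 col_mx0.
by rewrite -[a *m _]trmxK trmx_mul trmxK Xa0 trmx0.
Qed.

Lemma linearize_sol_set (U V : 'M[C]_n) (z : 'cV[C]_n) :
  U *m N + V *m conjm M = 0 ->
  U *m (M *m z + N *m conjm z) + V *m conjm (M *m z + N *m conjm z) =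
  (U *m M + V *m conjm N) *m z.
Proof.
move=> UV0; rewrite conjmD !conjmM conjmK !mulmxDr !mulmxDl !mulmxA.
by rewrite -addrA (addrA (U *m N *m _)) -[U *m N *m _ + _]mulmxDl UV0 mul0mx add0r.
Qed.

Lemma sol0_in_kerM_linearization :
  sol0_in_kerM ->
  exists U V : 'M[C]_n,
    forall p, range_MN M N p -> forall z,
      sol_set M N p z <-> (U *m M + V *m conjm N) *m z = U *m p + V *m conjm p.
Proof.
move/sol0_in_kerM_capmx/exists_annihilator_injective_on => [W [WY0 Winj]].
exists (lsubmx W), (rsubmx W) => p [z0 z0p] z.
have UV0 : lsubmx W *m N + rsubmx W *m conjm M = 0.
  by rewrite -mul_row_col hsubmxK.
split=> [<-|]; first by rewrite linearize_sol_set.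
rewrite -z0p linearize_sol_set // => /eqP; rewrite -subr_eq0 -mulmxBr => /eqP.
rewrite -mul_row_col hsubmxK => /Winj; rewrite mul_col_mx -col_mx0.
case/eq_col_mx => Mzz0 Nzz0.
have Nzz0' : N *m conjm (z - z0) = 0.
  by rewrite -[LHS]conjmK conjmM conjmK Nzz0 conjm0.
move: Mzz0 Nzz0'; rewrite conjmB !mulmxBr => /eqP; rewrite subr_eq0 => /eqP Mz.
by move/eqP; rewrite subr_eq0 => /eqP Nz; rewrite /sol_set Mz Nz.
Qed.

Lemma linearization_complex_subspace (U V : 'M[C]_n) :
  (forall p, range_MN M N p -> forall z,
     sol_set M N p z <-> (U *m M + V *m conjm N) *m z = U *m p + V *m conjm p) ->
  complex_subspace (sol_set M N 0).
Proof.
move=> UVsol.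
have range0 : range_MN M N 0 by exists 0; rewrite conjm0 !mulmx0 addr0.
have sol0E z : sol_set M N 0 z <-> (U *m M + V *m conjm N) *m z = 0.
  by have := UVsol 0 range0 z; rewrite conjm0 !mulmx0 addr0.
split=> [|a z w /sol0E Lz /sol0E Lw]; apply/sol0E; first by rewrite mulmx0.
by rewrite mulmxDr -scalemxAr Lz Lw scaler0 add0r.
Qed.

End LinearizedSystem.

Theorem proposition1 (C : numClosedFieldType) (n : nat) (M N : 'M[C]_n)
  (Pperp : 'M[C]_(n + n))
  (hP : is_orth_proj_range_perp (col_mx N (conjm M)) Pperp) :
  [<-> complex_subspace (sol_set M N 0);
       (forall z w : 'cV[C]_n,
          Pperp *m col_mx z (conjm z) = Pperp *m col_mx w (conjm w) -> z = w);
       exists U V : 'M[C]_n,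
         forall p : 'cV[C]_n, range_MN M N p ->
           forall z : 'cV[C]_n,
             sol_set M N p z <->
             (U *m M + V *m conjm N) *m z = U *m p + V *m conjm p].
Proof.
have projP := injective_orth_proj_graphP hP.
have kerP := sol0_in_kerM_conjP M N.
have subP := complex_subspace_sol0P M N.
split=> [/subP/kerP/projP //|]; split=> [/projP/kerP|[U [V]]].
  exact: sol0_in_kerM_linearization.
exact: linearization_complex_subspace.
Qed.
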